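(* Let $(M,g)$ be a Riemannian manifold isometrically immersed into a Riemannian manifold $(N,\widetilde g)$ carrying a Riemannian $(a,b)$-complex metallic structure $\widetilde P$, and let $P,Q,R,S$ be defined by $\widetilde PX=PX+QX$ and $\widetilde P\xi=R\xi+S\xi$ (tangent plus normal parts) for $X$ tangent and $\xi$ normal to $M$. Then $M$ is invariant (i.e. $\widetilde P(T_xM)\subset T_xM$ for all $x\in M$) if and only if $P$ is a non-trivial Riemannian $(a,b)$-complex metallic structure on $M$. In particular, invariant submanifolds of Riemannian manifolds with a Riemannian $(a,b)$-complex metallic structure are even-dimensional.
   Context: For $a,b>0$ with $a<2\sqrt b$, an $(a,b)$-complex metallic structure is a $(1,1)$-tensor $J$ with $J^2+aJ+b\,\mathrm{id}=0$; it is Riemannian for a metric $g$ if $g(JX,Y)=-g(X,JY)-a\,g(X,Y)$. *)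

(* pointwise (fiberwise) linear algebra of the tangent/normal
   decomposition along an isometric immersion. *)
From HB Require Import structures.
From mathcomp Require Import all_boot all_order all_algebra.
Set Implicit Arguments. Unset Strict Implicit. Unset Printing Implicit Defensive.
Import Order.TTheory GRing.Theory Num.Theory.
Local Open Scope ring_scope.

Section Defs.
Variables (R : rcfType) (V : vectType R).

Definition metric_form (g : V -> V -> R) : Prop :=
  [/\ forall (c : R) (u v w : V), g (c *: u + v) w = c * g u w + g v w,
      forall u v, g u v = g v u
    & forall v, v != 0 -> 0 < g v v].

Definition complex_metallic (a b : R) (U : {vspace V}) (J : V -> V) : Prop :=
  (forall X, X \in U -> J X \in U) /\
  (forall X, X \in U -> J (J X) + a *: J X + b *: X = 0).

Definition riemannian_wrt (a : R) (g : V -> V -> R) (U : {vspace V})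
  (J : V -> V) : Prop :=
  forall X Y, X \in U -> Y \in U -> g (J X) Y = - g X (J Y) - a * g X Y.

Definition riemannian_complex_metallic (a b : R) (g : V -> V -> R)
  (U : {vspace V}) (J : V -> V) : Prop :=
  complex_metallic a b U J /\ riemannian_wrt a g U J.

Definition nontrivial_on (U : {vspace V}) (J : V -> V) : Prop :=
  exists2 X, X \in U & J X != 0.

Definition normal_space (g : V -> V -> R) (T N : {vspace V}) : Prop :=
  forall w, w \in N <-> (forall u, u \in T -> g u w = 0).

Definition tangential_part (T N : {vspace V}) (Pt : 'End(V)) : V -> V :=
  fun X => daddv_pi T N (Pt X).

Definition invariant_sub (T : {vspace V}) (Pt : 'End(V)) : Prop :=
  forall X, X \in T -> Pt X \in T.

End Defs.

(* If P satisfies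
   P^2 + aP + b = 0 on TM, projecting P~^2 X + aP~X + bX = 0 onto TM shows
   that P~QX is normal; the Riemannian identity for P~ then gives
   g(QX, QX) = -g(P~QX, X) - a g(QX, X) = 0, so Q = 0 and TM is invariant.
   Conversely, on an invariant TM, P is the restriction of P~.  On an
   invariant TM the endomorphism J = 2P~ + a satisfies J^2 = (a^2 - 4b) id
   with a^2 - 4b < 0, so det(J)^2 = (a^2 - 4b)^m forces m to be even. *)
From HB Require Import structures.
From mathcomp Require Import all_boot all_order all_algebra.
From mathcomp Require Import ring lra zify.
Import Order.TTheory GRing.Theory Num.Theory.
Import passmx.
Local Open Scope ring_scope.
Set Implicit Arguments. Unset Strict Implicit.

Lemma mx_quadratic_even_size (K : realFieldType) (n : nat) (A : 'M[K]_n)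
    (a b : K) :
  a ^+ 2 < 4 * b -> A *m A + a *: A + b%:M = 0 -> ~~ odd n.
Proof.
case: n A => [//|n] A disc_lt0 rootA.
pose p : {poly K} := 'X * 'X + a%:P * 'X + b%:P.
pose q : {poly K} := 2%:P * 'X + a%:P.
have pA0 : horner_mx A p = 0.
  by rewrite !rmorphD !rmorphM /= !horner_mx_C horner_mx_X -!mulmxE mul_scalar_mx.
have qA_sqr : horner_mx A q * horner_mx A q = (a ^+ 2 - 4 * b)%:M.
  have -> : (a ^+ 2 - 4 * b)%:M = horner_mx A (q * q - 4%:P * p).
    by rewrite -(horner_mx_C A); congr horner_mx; rewrite /p /q; ring.
  by rewrite rmorphB !rmorphM /= pA0 mulr0 subr0.
have : \det (horner_mx A q) ^+ 2 = (a ^+ 2 - 4 * b) ^+ n.+1.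
  by rewrite expr2 -det_mulmx mulmxE qA_sqr det_scalar.
move=> detB_sqr; apply/negP => odd_n.
have := sqr_ge0 (\det (horner_mx A q)).
by rewrite detB_sqr exprn_odd_ge0 // subr_ge0 leNgt disc_lt0.
Qed.

Lemma dimv_quadratic_even (K : realFieldType) (V : vectType K)
    (U : {vspace V}) (f : 'End(V)) (a b : K) :
  a ^+ 2 < 4 * b -> {in U, forall u, f u \in U} ->
  {in U, forall u, f (f u) + a *: f u + b *: u = 0} -> ~~ odd (\dim U).
Proof.
move=> disc_lt0 fU_U rootf.
pose fU : 'End(subvs_of U) := (linfun (vsproj U) \o f \o linfun vsval)%VF.
have fUE u : vsval (fU u) = f (vsval u).
  by rewrite !comp_lfunE !lfunE /= vsprojK ?fU_U ?subvsP.
have root_fU : (fU \o fU + a *: fU + b *: \1 = 0)%VF.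
  apply/lfunP => u; apply: subvs_inj.
  rewrite !add_lfunE !scale_lfunE comp_lfunE id_lfunE zero_lfunE.
  by rewrite !linearD !linearZ /= !fUE rootf ?subvsP.
have e_basis := vbasisP {: subvs_of U}.
have := congr1 (mxof (vbasis {: subvs_of U}) (vbasis {: subvs_of U})) root_fU.
rewrite !linearD !linearZ /= (mxof_comp _ _ e_basis).
rewrite mxof1 ?(basis_free e_basis) // [mxof _ _ 0]linear0 scalemx1.
by move/(mx_quadratic_even_size disc_lt0); rewrite dimvf.
Qed.

Lemma sqr_lt_4mul (R : rcfType) (a b : R) :
  0 <= a -> a < 2 * Num.sqrt b -> a ^+ 2 < 4 * b.
Proof.
move=> a_ge0 a_lt.
have sqrtb_gt0 : 0 < Num.sqrt b by lra.
rewrite -[b]sqr_sqrtr; last by rewrite ltW // -sqrtr_gt0.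
nra.
Qed.

Section MetricForm.
Variables (R : rcfType) (V : vectType R) (g : V -> V -> R).
Hypothesis g_metric : metric_form g.

Lemma metric0l w : g 0 w = 0.
Proof.
case: g_metric => lin _ _; have := lin 1 0 0 w.
by rewrite scaler0 addr0 mul1r => g0w; apply: (addrI (g 0 w)); rewrite -g0w addr0.
Qed.

Lemma metricZl c u w : g (c *: u) w = c * g u w.
Proof. by case: g_metric => lin _ _; have := lin c u 0 w; rewrite addr0 metric0l addr0. Qed.

Lemma metricDl u v w : g (u + v) w = g u w + g v w.
Proof. by case: g_metric => lin _ _; have := lin 1 u v w; rewrite scale1r mul1r. Qed.

Lemma metricC u v : g u v = g v u.
Proof. by case: g_metric. Qed.

Lemma metricDr u v w : g w (u + v) = g w u + g w v.
Proof. by rewrite metricC metricDl !(metricC w). Qed.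

Lemma metricZr c u w : g w (c *: u) = c * g w u.
Proof. by rewrite metricC metricZl metricC. Qed.

Lemma metric_suml (I : Type) (r : seq I) (F : I -> V) w :
  g (\sum_(i <- r) F i) w = \sum_(i <- r) g (F i) w.
Proof.
elim: r => [|i r IH]; first by rewrite !big_nil metric0l.
by rewrite !big_cons metricDl IH.
Qed.

Lemma metric_anisotropic v : g v v = 0 -> v = 0.
Proof.
case: g_metric => _ _ pos gvv0; apply/eqP; apply: contraT => /pos.
by rewrite gvv0 ltxx.
Qed.

Variables (T N : {vspace V}).
Hypothesis TN_normal : normal_space g T N.

Lemma normal_space_cap0 : (T :&: N = 0)%VS.
Proof.
apply/eqP; rewrite -subv0; apply/subvP => w /memv_capP [wT wN].
by rewrite memv0; apply/eqP/metric_anisotropic; exact: (TN_normal w).1 wN w wT.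
Qed.

Definition basis_pairing (w : V) : 'rV[R]_(\dim T) :=
  \row_i g (vbasis T)`_i w.

Lemma basis_pairing_is_linear : linear basis_pairing.
Proof. by move=> c u v; apply/rowP => i; rewrite !mxE metricDr metricZr. Qed.

HB.instance Definition _ :=
  GRing.isSemilinear.Build R V 'rV[R]_(\dim T) _ basis_pairing
    (GRing.semilinear_linear basis_pairing_is_linear).

Lemma lker_basis_pairing : (lker (linfun basis_pairing) <= N)%VS.
Proof.
apply/subvP => w; rewrite memv_ker lfunE /= => /eqP pair0.
apply/(TN_normal w).2 => u uT.
rewrite (coord_vbasis uT) metric_suml big1 // => i _.
have : basis_pairing w 0 i = 0 by rewrite pair0 mxE.
by rewrite metricZl mxE => ->; rewrite mulr0.
Qed.

Lemma normal_space_addv : (T + N = fullv)%VS.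
Proof.
apply/eqP; rewrite eqEdim subvf /= dimv_disjoint_sum ?normal_space_cap0 //.
have := limg_ker_dim (linfun basis_pairing) fullv; rewrite capfv.
have := dimvS (subvf (limg (linfun basis_pairing))).
have := dimvS lker_basis_pairing.
rewrite dimvf /dim /= mul1n; lia.
Qed.

End MetricForm.

Section TangentNormalParts.
Variables (R : rcfType) (V : vectType R) (g : V -> V -> R) (a b : R).
Hypothesis g_metric : metric_form g.
Variable Pt : 'End(V).
Hypothesis Pt_structure : riemannian_complex_metallic a b g fullv Pt.
Variables (T N : {vspace V}).
Hypothesis TN_normal : normal_space g T N.

Let Pt_quadratic X : Pt (Pt X) + a *: Pt X + b *: X = 0.
Proof. by case: Pt_structure => [[_ ->]] //; rewrite memvf. Qed.

Let Pt_skew X Y : g (Pt X) Y = - g X (Pt Y) - a * g X Y.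
Proof. by case: Pt_structure => _ ->; rewrite ?memvf. Qed.

Local Notation P := (tangential_part T N Pt).
Local Notation pi := (daddv_pi T N).

Definition normal_part (X : V) : V := daddv_pi N T (Pt X).
Local Notation Q := normal_part.

Let TN_cap0 := normal_space_cap0 g_metric TN_normal.

Lemma daddv_pi_tangent_normal v : pi v + daddv_pi N T v = v.
Proof.
by rewrite daddv_pi_add ?TN_cap0 ?(normal_space_addv g_metric TN_normal) ?memvf.
Qed.

Lemma tangential_add_normal X : P X + Q X = Pt X.
Proof. exact: daddv_pi_tangent_normal. Qed.

Lemma daddv_pi_eq0_normal v : pi v = 0 -> v \in N.
Proof. by move=> pi0; rewrite -(daddv_pi_tangent_normal v) pi0 add0r memv_pi. Qed.

Lemma normal_metric_tangent u w : u \in T -> w \in N -> g w u = 0.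
Proof. by move=> uT wN; rewrite metricC //; exact: (TN_normal w).1 wN u uT. Qed.

Lemma tangential_part_invariant X :
  invariant_sub T Pt -> X \in T -> P X = Pt X.
Proof. by move=> Pt_T XT; rewrite /tangential_part daddv_pi_id ?Pt_T. Qed.

Lemma metallic_neq0 X : b != 0 -> X != 0 -> Pt X != 0.
Proof.
move=> b_neq0; apply: contra_neq => PtX0.
have := Pt_quadratic X; rewrite PtX0 linear0 scaler0 !add0r => /eqP.
by rewrite scaler_eq0 (negPf b_neq0) => /eqP.
Qed.

Lemma invariant_tangential_structure :
  b != 0 -> (0 < \dim T)%N -> invariant_sub T Pt ->
  riemannian_complex_metallic a b g T P /\ nontrivial_on T P.
Proof.
move=> b_neq0 dimT_gt0 Pt_T.
have PE := tangential_part_invariant Pt_T.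
split; first split; first split.
- by move=> X _; exact: memv_pi.
- by move=> X XT; rewrite !PE ?Pt_T.
- by move=> X Y XT YT; rewrite !PE.
exists (vpick T); rewrite ?memv_pick // PE ?memv_pick // metallic_neq0 //.
by rewrite vpick0 -dimv_eq0 -lt0n.
Qed.

Lemma Pt_normal_part_normal X :
  complex_metallic a b T P -> X \in T -> Pt (Q X) \in N.
Proof.
move=> [_ P_quadratic] XT; apply: daddv_pi_eq0_normal.
have := congr1 pi (Pt_quadratic X).
rewrite -[in Pt (Pt X)](tangential_add_normal X) !linearD !linearZ /=.
rewrite (daddv_pi_id TN_cap0 XT) linear0 -{1}(P_quadratic X XT) -!addrA.
by move=> /addrI /(canRL (addrK _)); rewrite subrr.
Qed.

Lemma normal_part_eq0 X : Pt (Q X) \in N -> X \in T -> Q X = 0.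
Proof.
move=> PtQ_N XT; apply: (metric_anisotropic g_metric).
have QN : Q X \in N := memv_pi _ _ _.
have := Pt_skew (Q X) X.
rewrite (normal_metric_tangent XT PtQ_N) (normal_metric_tangent XT QN).
rewrite mulr0 subr0 -tangential_add_normal metricDr //.
rewrite (normal_metric_tangent (memv_pi _ _ _) QN) add0r.
by move/eqP; rewrite eq_sym oppr_eq0 => /eqP.
Qed.

Lemma tangential_structure_invariant :
  complex_metallic a b T P -> invariant_sub T Pt.
Proof.
move=> P_structure X XT.
rewrite -tangential_add_normal normal_part_eq0 ?Pt_normal_part_normal //.
by rewrite addr0 memv_pi.
Qed.

Lemma invariant_dim_even :
  0 <= a -> a < 2 * Num.sqrt b -> invariant_sub T Pt -> ~~ odd (\dim T).
Proof.
move=> a_ge0 a_lt Pt_T.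
by apply: (dimv_quadratic_even (sqr_lt_4mul a_ge0 a_lt) Pt_T) => X _.
Qed.

End TangentNormalParts.

Unset Implicit Arguments. Set Strict Implicit.

Theorem proposition4p4 (R : rcfType) (V : vectType R) (Mpt : Type) (x0 : Mpt)
  (m : nat) (a b : R) (g : Mpt -> V -> V -> R) (Pt : Mpt -> 'End(V))
  (TM NM : Mpt -> {vspace V}) :
  0 < a -> 0 < b -> a < 2 * Num.sqrt b ->
  (forall x, metric_form (g x)) ->
  (forall x, riemannian_complex_metallic a b (g x) fullv (Pt x)) ->
  (forall x, \dim (TM x) = m) -> (0 < m)%N ->
  (forall x, normal_space (g x) (TM x) (NM x)) ->
  ((forall x, invariant_sub (TM x) (Pt x)) <->
   (forall x, riemannian_complex_metallic a b (g x) (TM x)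
                (tangential_part (TM x) (NM x) (Pt x))
              /\ nontrivial_on (TM x) (tangential_part (TM x) (NM x) (Pt x))))
  /\ ((forall x, invariant_sub (TM x) (Pt x)) -> ~~ odd m).
Proof.
move=> a_gt0 b_gt0 a_lt g_metric Pt_structure dimTM m_gt0 TN_normal.
split; first split.
- move=> Pt_TM x.
  apply: (invariant_tangential_structure (g_metric x) (Pt_structure x)
            (TN_normal x)); last exact: Pt_TM.
  + by rewrite gt_eqF.
  + by rewrite dimTM.
- move=> P_structure x.
  apply: (tangential_structure_invariant (g_metric x) (Pt_structure x)
            (TN_normal x)).
  by case: (P_structure x) => [[]].
- move=> Pt_TM; rewrite -(dimTM x0).
  exact: (invariant_dim_even (Pt_structure x0) (ltW a_gt0) a_lt (Pt_TM x0)).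
Qed.
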